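(* Let $a,b,c>0$ and consider the cubic polynomial $p_3(\lambda)=\lambda^3-b\lambda^2-(a+c)\lambda+cb$. Then $p_3$ has three distinct real roots $\lambda_0,\lambda_1,\lambda_2$ with the following properties: (1) they are given by $$\lambda_k=2\sqrt{\frac{3(a+c)+b^2}{9}}\cos\Big(\frac{\theta}{3}+\frac{2k\pi}{3}\Big)+\frac b3,\quad k=0,1,2,\qquad \cos\theta=\frac b2\,\frac{2b^2+9(a+c)-27c}{(3(a+c)+b^2)^{3/2}},\ \theta\in[0,\pi];$$ (2) $\lambda_0\in(\max(b,\sqrt c),+\infty)$, $\lambda_1\in(-\infty,-\sqrt c)$, $\lambda_2\in(0,\min(b,\sqrt c))$; (3) $b=\lambda_0+\lambda_1+\lambda_2$, $a+c=-(\lambda_1\lambda_2+\lambda_0\lambda_1+\lambda_0\lambda_2)$, $cb=-\lambda_0\lambda_1\lambda_2$; (4) $c-\lambda_0^2<0$, $c-\lambda_1^2<0$, $c-\lambda_2^2>0$, and $\lambda_2<|\lambda_1|<\lambda_0$. *)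

From Stdlib Require Import Reals Lra.
Open Scope R_scope.

Definition p3 (a b c x : R) : R := x ^ 3 - b * x ^ 2 - (a + c) * x + c * b.

Definition lam (a b c theta : R) (k : nat) : R :=
  2 * sqrt ((3 * (a + c) + b ^ 2) / 9) * cos (theta / 3 + 2 * INR k * PI / 3) + b / 3.

From Stdlib Require Import Reals Lra.
Open Scope R_scope.

(* The values p3(-sqrt c) = a sqrt c, p3 0 = c b, p3(sqrt c) = -a sqrt c and
   p3 b = -a b, together with the limits at -oo and +oo, give three sign
   changes of p3, hence three real roots in the stated intervals; Vieta's
   formulas follow from their distinctness.  Writing 9 m^2 = 3(a+c) + b^2 and
   N = b (2b^2 + 9(a+c) - 27c), so that cos theta = N / (54 m^3), the
   substitution x = 2 m cos phi + b/3 turns p3 into 2 m^3 cos (3 phi) - N/27 by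
   the triple-angle formula; hence every phi with cos (3 phi) = cos theta gives
   a root.  Such a theta exists because 4 (9 m^2)^3 - N^2 is 27 times the
   product of the squared differences of the roots, which forces
   |cos theta| < 1.  Comparing the three cosines with -1/2 and 1/2 sorts the
   trigonometric roots, which identifies them with the roots found before. *)

Lemma p3_continuous a b c : continuity (p3 a b c).
Proof. unfold p3. apply derivable_continuous. reg. Qed.

Lemma IVT_open f x y :
  continuity f -> x < y -> f x * f y < 0 -> exists z, x < z < y /\ f z = 0.
Proof.
  intros Hf Hxy Hsign.
  destruct (IVT_cor f x y Hf (Rlt_le _ _ Hxy) (Rlt_le _ _ Hsign)) as [z [Hz Hfz]].
  assert (z <> x) by (intros ->; rewrite Hfz, Rmult_0_l in Hsign; lra).
  assert (z <> y) by (intros ->; rewrite Hfz, Rmult_0_r in Hsign; lra).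
  exists z. split; [lra | exact Hfz].
Qed.

Lemma mult_sub_eq0_r u v w : (u - v) * w = 0 -> u <> v -> w = 0.
Proof.
  intros Hprod Huv. destruct (Rmult_integral _ _ Hprod) as [H | H]; [lra | exact H].
Qed.

Lemma p3_vieta a b c r0 r1 r2 :
  p3 a b c r0 = 0 -> p3 a b c r1 = 0 -> p3 a b c r2 = 0 ->
  r0 <> r1 -> r0 <> r2 -> r1 <> r2 ->
  b = r0 + r1 + r2 /\ a + c = - (r1 * r2 + r0 * r1 + r0 * r2) /\
  c * b = - (r0 * r1 * r2).
Proof.
  intros H0 H1 H2 n01 n02 n12.
  set (q x y := x ^ 2 + x * y + y ^ 2 - b * (x + y) - (a + c)).
  assert (Hq : forall x y, p3 a b c x - p3 a b c y = (x - y) * q x y)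
    by (intros; unfold p3, q; ring).
  assert (Q01 : q r0 r1 = 0).
  { apply (mult_sub_eq0_r r0 r1); [rewrite <- Hq, H0, H1; ring | exact n01]. }
  assert (Q02 : q r0 r2 = 0).
  { apply (mult_sub_eq0_r r0 r2); [rewrite <- Hq, H0, H2; ring | exact n02]. }
  assert (Hb : b = r0 + r1 + r2).
  { assert (Hdiff : (r1 - r2) * (r0 + r1 + r2 - b) = 0)
      by (transitivity (q r0 r1 - q r0 r2); [unfold q; ring | lra]).
    pose proof (mult_sub_eq0_r _ _ _ Hdiff n12). lra. }
  assert (Hac : a + c = - (r1 * r2 + r0 * r1 + r0 * r2))
    by (unfold q in Q01; rewrite Hb in Q01; lra).
  split; [exact Hb | split; [exact Hac |]].
  replace (c * b) with (b * r0 ^ 2 + (a + c) * r0 - r0 ^ 3) by (unfold p3 in H0; lra).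
  rewrite Hac, Hb. ring.
Qed.

Lemma p3_root_cases a b c r0 r1 r2 x :
  p3 a b c r0 = 0 -> p3 a b c r1 = 0 -> p3 a b c r2 = 0 ->
  r0 <> r1 -> r0 <> r2 -> r1 <> r2 ->
  p3 a b c x = 0 -> x = r0 \/ x = r1 \/ x = r2.
Proof.
  intros H0 H1 H2 n01 n02 n12 Hx.
  destruct (p3_vieta a b c r0 r1 r2 H0 H1 H2 n01 n02 n12) as (Hb & Hac & Hcb).
  assert (Hfactor : (x - r0) * (x - r1) * (x - r2) = 0)
    by (rewrite <- Hx; unfold p3; rewrite Hcb, Hac, Hb; ring).
  destruct (Rmult_integral _ _ Hfactor) as [H | H];
    [destruct (Rmult_integral _ _ H) as [H' | H'] |]; lra.
Qed.

Lemma p3_sorted_roots_unique a b c r0 r1 r2 s0 s1 s2 :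
  p3 a b c r0 = 0 -> p3 a b c r1 = 0 -> p3 a b c r2 = 0 -> r1 < r2 < r0 ->
  p3 a b c s0 = 0 -> p3 a b c s1 = 0 -> p3 a b c s2 = 0 -> s1 < s2 < s0 ->
  s0 = r0 /\ s1 = r1 /\ s2 = r2.
Proof.
  intros H0 H1 H2 Hr S0 S1 S2 Hs.
  assert (Hcases : forall x, p3 a b c x = 0 -> x = r0 \/ x = r1 \/ x = r2)
    by (intros x; apply p3_root_cases; auto; lra).
  destruct (Hcases _ S0) as [E0 | [E0 | E0]];
    destruct (Hcases _ S1) as [E1 | [E1 | E1]];
    destruct (Hcases _ S2) as [E2 | [E2 | E2]]; lra.
Qed.

Lemma p3_at_b a b c : p3 a b c b = - (a * b).
Proof. unfold p3. ring. Qed.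

Lemma p3_at_sqrt a b c : 0 <= c -> p3 a b c (sqrt c) = - (a * sqrt c).
Proof.
  intros hc. pose proof (pow2_sqrt c hc) as Hsq. unfold p3.
  replace (sqrt c ^ 3) with (sqrt c ^ 2 * sqrt c) by ring. rewrite Hsq. ring.
Qed.

Lemma p3_at_opp_sqrt a b c : 0 <= c -> p3 a b c (- sqrt c) = a * sqrt c.
Proof.
  intros hc. pose proof (pow2_sqrt c hc) as Hsq. unfold p3.
  replace ((- sqrt c) ^ 3) with (- (sqrt c ^ 2 * sqrt c)) by ring.
  replace ((- sqrt c) ^ 2) with (sqrt c ^ 2) by ring. rewrite Hsq. ring.
Qed.

Section RootLocation.

Variables a b c : R.
Hypotheses (ha : 0 < a) (hb : 0 < b) (hc : 0 < c).

Lemma p3_neg_at_b_sqrt x : x = b \/ x = sqrt c -> p3 a b c x < 0.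
Proof.
  pose proof (sqrt_lt_R0 c hc).
  intros [-> | ->]; [rewrite p3_at_b | rewrite p3_at_sqrt by lra]; nra.
Qed.

Lemma p3_three_roots :
  exists r0 r1 r2,
    p3 a b c r0 = 0 /\ p3 a b c r1 = 0 /\ p3 a b c r2 = 0 /\
    r1 < - sqrt c /\ 0 < r2 < Rmin b (sqrt c) /\ Rmax b (sqrt c) < r0.
Proof.
  set (q := sqrt c).
  assert (hq : 0 < q) by apply (sqrt_lt_R0 c hc).
  assert (hqq : q ^ 2 = c) by apply (pow2_sqrt c), Rlt_le, hc.
  set (Y := 1 + a + c + q).
  assert (Pleft : p3 a b c (- Y) < 0).
  { assert (Y ^ 2 > Y) by (unfold Y; nra).
    assert (Y > a + c) by (unfold Y; lra).
    replace (p3 a b c (- Y)) with (- Y * (Y ^ 2 - (a + c)) + b * (c - Y ^ 2))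
      by (unfold p3; ring).
    assert (0 < Y * (Y ^ 2 - (a + c))) by (apply Rmult_lt_0_compat; lra).
    assert (b * (c - Y ^ 2) < 0) by (apply Rmult_pos_neg; lra).
    lra. }
  set (X := 1 + a + b + c + q).
  assert (Pright : 0 < p3 a b c X).
  { assert (X ^ 2 > X) by (unfold X; nra).
    replace (p3 a b c X) with (X ^ 2 * (X - b) - (a + c) * X + c * b)
      by (unfold p3; ring).
    replace (X - b) with (1 + a + c + q) by (unfold X; ring).
    assert (X ^ 2 * (1 + a + c + q) > X * (a + c)) by (unfold X in *; nra).
    assert (0 < c * b) by (apply Rmult_lt_0_compat; lra).
    lra. }
  assert (Pmq : 0 < p3 a b c (- q))
    by (unfold q; rewrite p3_at_opp_sqrt by lra; fold q; apply Rmult_lt_0_compat; lra).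
  assert (P0 : 0 < p3 a b c 0)
    by (unfold p3; ring_simplify; apply Rmult_lt_0_compat; lra).
  assert (Pmin : p3 a b c (Rmin b q) < 0)
    by (apply Rmin_case; apply p3_neg_at_b_sqrt; auto).
  assert (Pmax : p3 a b c (Rmax b q) < 0)
    by (apply Rmax_case; apply p3_neg_at_b_sqrt; auto).
  destruct (IVT_open (p3 a b c) (- Y) (- q)) as (r1 & Hr1 & E1);
    [apply p3_continuous | unfold Y; lra | nra |].
  destruct (IVT_open (p3 a b c) 0 (Rmin b q)) as (r2 & Hr2 & E2);
    [apply p3_continuous | apply Rmin_glb_lt; lra | nra |].
  destruct (IVT_open (p3 a b c) (Rmax b q) X) as (r0 & Hr0 & E0);
    [apply p3_continuous | apply Rmax_lub_lt; unfold X; lra | nra |].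
  exists r0, r1, r2. repeat split; (assumption || lra).
Qed.

End RootLocation.

Lemma cos_3x x : cos (3 * x) = 4 * cos x ^ 3 - 3 * cos x.
Proof.
  replace (3 * x) with (2 * x + x) by ring.
  rewrite cos_plus, cos_2a_cos, sin_2a.
  pose proof (sin2_cos2 x) as H. unfold Rsqr in H.
  replace (2 * sin x * cos x * sin x) with (2 * cos x * (sin x * sin x)) by ring.
  replace (sin x * sin x) with (1 - cos x * cos x) by lra.
  ring.
Qed.

Lemma cos_2PI3 : cos (2 * PI / 3) = - (1 / 2).
Proof.
  replace (2 * PI / 3) with (PI - PI / 3) by field.
  rewrite Rtrigo_facts.cos_pi_minus, cos_PI3. reflexivity.
Qed.

Lemma cos_third_bounds theta : 0 < theta < PI ->
  1 / 2 < cos (theta / 3) /\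
  cos (theta / 3 + 2 * PI / 3) < - (1 / 2) /\
  - (1 / 2) < cos (theta / 3 + 4 * PI / 3) < 1 / 2.
Proof.
  intros Hth. pose proof PI_RGT_0.
  replace (theta / 3 + 4 * PI / 3) with ((theta / 3 + PI / 3) + PI) by field.
  rewrite neg_cos.
  split; [rewrite <- cos_PI3; apply cos_decreasing_1; lra |].
  split; [rewrite <- cos_2PI3; apply cos_decreasing_1; lra |].
  split.
  - apply Ropp_lt_contravar. rewrite <- cos_PI3. apply cos_decreasing_1; lra.
  - rewrite <- (Ropp_involutive (1 / 2)). apply Ropp_lt_contravar.
    rewrite <- cos_2PI3. apply cos_decreasing_1; lra.
Qed.

Lemma Rpower_3_2 x : 0 < x -> Rpower x (3 / 2) = x * sqrt x.
Proof.
  intros hx. replace (3 / 2) with (1 + / 2) by field.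
  rewrite Rpower_plus, Rpower_1, Rpower_sqrt; auto.
Qed.

Definition cos_theta (a b c : R) : R :=
  b / 2 * (2 * b ^ 2 + 9 * (a + c) - 27 * c) / Rpower (3 * (a + c) + b ^ 2) (3 / 2).

Section Trigonometric.

Variables a b c : R.

Let S := 3 * (a + c) + b ^ 2.
Let m := sqrt (S / 9).
Let N := 2 * b ^ 3 + 9 * b * (a + c) - 27 * (c * b).

Lemma radius_sq : 0 < S -> 9 * m ^ 2 = S.
Proof. intros HS. unfold m. rewrite pow2_sqrt; lra. Qed.

Lemma p3_shift r t : 9 * r ^ 2 = S ->
  p3 a b c (2 * r * t + b / 3) = 2 * r ^ 3 * (4 * t ^ 3 - 3 * t) - N / 27.
Proof.
  intros Hr. assert (Hac : a + c = (9 * r ^ 2 - b ^ 2) / 3) by (unfold S in Hr; lra).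
  unfold p3, N. rewrite Hac. field.
Qed.

Lemma cos_theta_scaled : 0 < S -> cos_theta a b c * (54 * m ^ 3) = N.
Proof.
  intros HS.
  assert (Hm : 0 < m) by (apply sqrt_lt_R0; lra).
  assert (HsqrtS : sqrt S = 3 * m)
    by (rewrite <- (radius_sq HS), <- sqrt_pow2 by lra; f_equal; ring).
  unfold cos_theta. fold S. rewrite Rpower_3_2, HsqrtS, <- (radius_sq HS) by exact HS.
  unfold N. field. lra.
Qed.

Lemma cubic_discriminant r0 r1 r2 :
  b = r0 + r1 + r2 -> a + c = - (r1 * r2 + r0 * r1 + r0 * r2) ->
  c * b = - (r0 * r1 * r2) ->
  4 * S ^ 3 - N ^ 2 = 27 * ((r0 - r1) * (r0 - r2) * (r1 - r2)) ^ 2.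
Proof. intros Hb Hac Hcb. unfold S, N. rewrite Hcb, Hac, Hb. ring. Qed.

Lemma cos_theta_bounds r0 r1 r2 : 0 < S ->
  p3 a b c r0 = 0 -> p3 a b c r1 = 0 -> p3 a b c r2 = 0 ->
  r0 <> r1 -> r0 <> r2 -> r1 <> r2 ->
  -1 < cos_theta a b c < 1.
Proof.
  intros HS H0 H1 H2 n01 n02 n12.
  destruct (p3_vieta a b c r0 r1 r2 H0 H1 H2 n01 n02 n12) as (Hb & Hac & Hcb).
  pose proof (cubic_discriminant r0 r1 r2 Hb Hac Hcb) as Hdisc.
  assert (Hdiff : (r0 - r1) * (r0 - r2) * (r1 - r2) <> 0)
    by (repeat apply Rmult_integral_contrapositive_currified; lra).
  pose proof (Rsqr_pos_lt _ Hdiff) as Hdiff2. rewrite Rsqr_pow2 in Hdiff2.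
  assert (Hm : 0 < m) by (apply sqrt_lt_R0; lra).
  assert (Hm6 : 0 < m ^ 6) by (apply pow_lt, Hm).
  rewrite <- (cos_theta_scaled HS), <- (radius_sq HS) in Hdisc.
  set (k := cos_theta a b c) in *.
  assert (Hk2 : k ^ 2 < 1) by nra.
  split; nra.
Qed.

Lemma lam_root theta k : 0 < S -> cos theta = cos_theta a b c ->
  p3 a b c (lam a b c theta k) = 0.
Proof.
  intros HS Hcos. unfold lam. fold S m.
  rewrite (p3_shift m) by exact (radius_sq HS).
  rewrite <- cos_3x.
  replace (3 * (theta / 3 + 2 * INR k * PI / 3)) with (theta + 2 * INR k * PI) by field.
  rewrite cos_period, Hcos.
  pose proof (cos_theta_scaled HS). lra.
Qed.

Lemma lam_sorted theta : 0 < S -> 0 < theta < PI ->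
  lam a b c theta 1 < lam a b c theta 2 < lam a b c theta 0.
Proof.
  intros HS Hth. destruct (cos_third_bounds theta Hth) as (C0 & C1 & C2).
  assert (Hm : 0 < m) by (apply sqrt_lt_R0; lra).
  unfold lam. fold S m.
  replace (theta / 3 + 2 * INR 0 * PI / 3) with (theta / 3) by (simpl; field).
  replace (theta / 3 + 2 * INR 1 * PI / 3) with (theta / 3 + 2 * PI / 3) by (simpl; field).
  replace (theta / 3 + 2 * INR 2 * PI / 3) with (theta / 3 + 4 * PI / 3) by (simpl; field).
  split; nra.
Qed.

End Trigonometric.

Theorem proposition1 (a b c : R) (ha : 0 < a) (hb : 0 < b) (hc : 0 < c) :
  exists (theta l0 l1 l2 : R),
    (* three distinct real roots, and they are all the roots *)
    p3 a b c l0 = 0 /\ p3 a b c l1 = 0 /\ p3 a b c l2 = 0 /\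
    l0 <> l1 /\ l0 <> l2 /\ l1 <> l2 /\
    (forall x, p3 a b c x = 0 -> x = l0 \/ x = l1 \/ x = l2) /\
    (* (1) trigonometric formula *)
    0 <= theta <= PI /\
    cos theta = b / 2 * (2 * b ^ 2 + 9 * (a + c) - 27 * c)
                / Rpower (3 * (a + c) + b ^ 2) (3 / 2) /\
    l0 = lam a b c theta 0 /\ l1 = lam a b c theta 1 /\ l2 = lam a b c theta 2 /\
    (* (2) location *)
    Rmax b (sqrt c) < l0 /\ l1 < - sqrt c /\ 0 < l2 < Rmin b (sqrt c) /\
    (* (3) Vieta *)
    b = l0 + l1 + l2 /\
    a + c = - (l1 * l2 + l0 * l1 + l0 * l2) /\
    c * b = - (l0 * l1 * l2) /\
    (* (4) *)
    c - l0 ^ 2 < 0 /\ c - l1 ^ 2 < 0 /\ c - l2 ^ 2 > 0 /\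
    l2 < Rabs l1 < l0.
Proof.
  destruct (p3_three_roots a b c ha hb hc) as (r0 & r1 & r2 & H0 & H1 & H2 & L1 & L2 & L0).
  pose proof (sqrt_lt_R0 c hc). pose proof (pow2_sqrt c (Rlt_le _ _ hc)).
  pose proof (Rmin_l b (sqrt c)). pose proof (Rmin_r b (sqrt c)).
  pose proof (Rmax_l b (sqrt c)). pose proof (Rmax_r b (sqrt c)).
  assert (n01 : r0 <> r1) by lra. assert (n02 : r0 <> r2) by lra.
  assert (n12 : r1 <> r2) by lra.
  destruct (p3_vieta a b c r0 r1 r2 H0 H1 H2 n01 n02 n12) as (Vb & Vac & Vcb).
  assert (HS : 0 < 3 * (a + c) + b ^ 2) by nra.
  set (theta := acos (cos_theta a b c)).
  pose proof (cos_theta_bounds a b c r0 r1 r2 HS H0 H1 H2 n01 n02 n12) as Hk.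
  assert (Hth : 0 < theta < PI) by exact (acos_bound_lt _ Hk).
  assert (Hcos : cos theta = cos_theta a b c) by (apply cos_acos; lra).
  assert (Hlam : forall k, p3 a b c (lam a b c theta k) = 0)
    by (intros k; apply lam_root; assumption).
  destruct (p3_sorted_roots_unique a b c r0 r1 r2 _ _ _ H0 H1 H2 ltac:(lra)
              (Hlam 0%nat) (Hlam 1%nat) (Hlam 2%nat) (lam_sorted a b c theta HS Hth))
    as (E0 & E1 & E2).
  exists theta, r0, r1, r2. rewrite Rabs_left by lra.
  repeat split; try assumption; try lra; try nra.
  intros x; apply p3_root_cases; assumption.
Qed.
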